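(* Let $L\in\{1,2\}$, ${\bf A}\in\mathbb R^{M\times N}$, ${\bf b}\in\mathbb R^M$, $\tilde\eta>0$, and let $(r,{\bf u})$ follow the weight-normalized gradient flow with $(\eta_r,\eta_{\bf u})=(\tilde\eta,1)$, $r_0>0$, ${\bf u}_0>0$. If all entries of ${\bf u}(t)$ are bounded away from zero uniformly in $t\ge0$, then $r(t)$ is bounded above uniformly in $t\ge0$.
   Context: Loss: $\mathcal L({\bf x})=\frac{1}{2L}\|{\bf A}{\bf x}^{\odot L}-{\bf b}\|_2^2$ ($\odot$ = entrywise power). Weight-normalized loss $\tilde{\mathcal L}(r,{\bf u})=\mathcal L\big(\frac{r}{\|{\bf u}\|_2}{\bf u}\big)$ for $r\in\mathbb R$, ${\bf u}\in\mathbb R^N\setminus\{0\}$. Weight-normalized gradient flow: $\partial_t r=-\eta_r\nabla_r\tilde{\mathcal L}(r,{\bf u})$, $\partial_t{\bf u}=-\eta_{\bf u}\nabla_{\bf u}\tilde{\mathcal L}(r,{\bf u})$, $r(0)=r_0$, ${\bf u}(0)={\bf u}_0$. *)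

From Stdlib Require Import Reals Lra.
From Coquelicot Require Import Coquelicot.
Open Scope R_scope.

Fixpoint fsum (n : nat) (f : nat -> R) : R :=
  match n with
  | O => 0
  | S k => fsum k f + f k
  end.

(* Vectors in R^N are functions nat -> R (only indices < N matter);
   the matrix A in R^{M x N} is A : nat -> nat -> R, entry A i j. *)

Definition loss (L M N : nat) (A : nat -> nat -> R) (b : nat -> R)
  (x : nat -> R) : R :=
  / (2 * INR L) *
  fsum M (fun i => (fsum N (fun j => A i j * x j ^ L) - b i) ^ 2).

Definition norm2 (N : nat) (u : nat -> R) : R :=
  sqrt (fsum N (fun j => u j ^ 2)).

Definition wn_loss (L M N : nat) (A : nat -> nat -> R) (b : nat -> R)
  (r : R) (u : nat -> R) : R :=
  loss L M N A b (fun j => r / norm2 N u * u j).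

Definition upd (u : nat -> R) (j : nat) (s : R) : nat -> R :=
  fun k => if Nat.eqb k j then s else u k.

Definition wn_flow (L M N : nat) (A : nat -> nat -> R) (b : nat -> R)
  (eta_r eta_u : R) (r : R -> R) (u : R -> nat -> R)
  (r0 : R) (u0 : nat -> R) : Prop :=
  r 0 = r0 /\
  (forall j, (j < N)%nat -> u 0 j = u0 j) /\
  filterlim r (at_right 0) (locally (r 0)) /\
  (forall j, (j < N)%nat ->
     filterlim (fun t => u t j) (at_right 0) (locally (u 0 j))) /\
  (forall t, 0 < t -> exists g,
     is_derive (fun s => wn_loss L M N A b s (u t)) (r t) g /\
     is_derive r t (- eta_r * g)) /\
  (forall t j, 0 < t -> (j < N)%nat -> exists g,
     is_derive (fun s => wn_loss L M N A b (r t) (upd (u t) j s)) (u t j) g /\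
     is_derive (fun tau => u tau j) t (- eta_u * g)).

(* Along the flow |u(t)| = rho0 is conserved (u' is orthogonal to u) and the
   loss at x(t) = r u / rho0 is nonincreasing (by Cauchy-Schwarz), so every
   residual r^L (A d)_i - b_i stays bounded, where d_j = (u_j / rho0)^L.
   With a generalized inverse G of A (A G A = A), at each time either some
   entry of A d is larger than a threshold eps, and then the residual bound
   bounds r^L, or d lies within a small tolerance of the vector k = d - G A d
   of ker A.  In that case a conserved quantity attached to k bounds r:
   <k, u> exp(r^2 / (2 eta rho0^2)) for L = 1, where <k, u> >= rho0 / 2, and
   sum_j k_j ln(u_j^2) + (sum_j k_j) r^2 / (eta rho0^2) for L = 2, where
   sum_j k_j >= 1/2 and ln(u_j^2) is bounded because c <= |u_j| <= rho0. *)

From Stdlib Require Import Reals Lra Lia Classical FunctionalExtensionality.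
From Coquelicot Require Import Coquelicot.
From mathcomp Require all_boot all_algebra Rstruct.
Open Scope R_scope.

Lemma fsum_ext n f g :
  (forall k, (k < n)%nat -> f k = g k) -> fsum n f = fsum n g.
Proof.
  induction n as [|n IH]; intros H; simpl; [reflexivity|].
  rewrite IH, H; auto with arith.
Qed.

Lemma fsum_plus n f g : fsum n (fun k => f k + g k) = fsum n f + fsum n g.
Proof. induction n; simpl; [lra|]. rewrite IHn; lra. Qed.

Lemma fsum_minus n f g : fsum n (fun k => f k - g k) = fsum n f - fsum n g.
Proof. induction n; simpl; [lra|]. rewrite IHn; lra. Qed.

Lemma fsum_scal n c f : fsum n (fun k => c * f k) = c * fsum n f.
Proof. induction n; simpl; [lra|]. rewrite IHn; lra. Qed.

Lemma fsum_scalr n c f : fsum n (fun k => f k * c) = fsum n f * c.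
Proof. induction n; simpl; [lra|]. rewrite IHn; lra. Qed.

Lemma fsum_const n c : fsum n (fun _ => c) = INR n * c.
Proof. induction n; simpl fsum; [simpl; lra|]. rewrite IHn, S_INR; lra. Qed.

Lemma fsum_zero n f : (forall k, (k < n)%nat -> f k = 0) -> fsum n f = 0.
Proof. intros H. rewrite (fsum_ext n f (fun _ => 0)), fsum_const by auto. lra. Qed.

Lemma fsum_le n f g :
  (forall k, (k < n)%nat -> f k <= g k) -> fsum n f <= fsum n g.
Proof.
  induction n as [|n IH]; intros H; simpl; [lra|].
  assert (fsum n f <= fsum n g) by (apply IH; auto).
  specialize (H n (Nat.lt_succ_diag_r n)); lra.
Qed.

Lemma fsum_nonneg n f : (forall k, (k < n)%nat -> 0 <= f k) -> 0 <= fsum n f.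
Proof.
  intros H. rewrite <- (fsum_zero n (fun _ => 0)) by auto. now apply fsum_le.
Qed.

Lemma fsum_abs n f : Rabs (fsum n f) <= fsum n (fun k => Rabs (f k)).
Proof.
  induction n; simpl; [rewrite Rabs_R0; lra|].
  eapply Rle_trans; [apply Rabs_triang|lra].
Qed.

Lemma fsum_abs_le n f B :
  (forall k, (k < n)%nat -> Rabs (f k) <= B) -> Rabs (fsum n f) <= INR n * B.
Proof.
  intros H. rewrite <- fsum_const. eapply Rle_trans; [apply fsum_abs|].
  now apply fsum_le.
Qed.

Lemma fsum_term n f j :
  (forall k, (k < n)%nat -> 0 <= f k) -> (j < n)%nat -> f j <= fsum n f.
Proof.
  induction n as [|n IH]; intros H Hj; simpl; [lia|].
  assert (0 <= fsum n f) by (apply fsum_nonneg; auto).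
  assert (0 <= f n) by auto.
  destruct (Nat.eq_dec j n) as [->|Hne]; [lra|].
  assert (f j <= fsum n f) by (apply IH; auto; lia). lra.
Qed.

Lemma fsum_swap n m (F : nat -> nat -> R) :
  fsum n (fun i => fsum m (fun j => F i j))
  = fsum m (fun j => fsum n (fun i => F i j)).
Proof.
  induction n; simpl; [symmetry; now apply fsum_zero|].
  rewrite IHn, <- fsum_plus. reflexivity.
Qed.

Lemma fsum_delta n j a :
  (j < n)%nat -> fsum n (fun k => if Nat.eqb k j then a k else 0) = a j.
Proof.
  induction n as [|n IH]; intros Hj; simpl; [lia|].
  destruct (Nat.eqb_spec n j) as [->|Hne].
  - rewrite fsum_zero; [lra|]. intros k Hk.
    destruct (Nat.eqb_spec k j); [lia|reflexivity].
  - rewrite IH by lia. lra.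
Qed.

Lemma fsum_cauchy_schwarz N (g v : nat -> R) :
  (fsum N (fun k => g k * v k)) ^ 2
  <= fsum N (fun k => g k ^ 2) * fsum N (fun k => v k ^ 2).
Proof.
  set (Q := fsum N (fun k => v k ^ 2)).
  set (T := fsum N (fun k => g k * v k)).
  set (S := fsum N (fun k => g k ^ 2)).
  assert (HQ : 0 <= Q) by (apply fsum_nonneg; intros; apply pow2_ge_0).
  (* expand 0 <= sum_k (Q g_k - T v_k)^2 = Q (Q S - T^2) *)
  assert (Hsq : 0 <= fsum N (fun k => (g k * Q - v k * T) ^ 2))
    by (apply fsum_nonneg; intros; apply pow2_ge_0).
  rewrite (fsum_ext N _ (fun k => Q ^ 2 * g k ^ 2 + (- 2 * Q * T) * (g k * v k)
                                   + T ^ 2 * v k ^ 2)) in Hsq by (intros; ring).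
  rewrite !fsum_plus, !fsum_scal in Hsq. fold Q T S in Hsq.
  destruct HQ as [HQ|HQ0].
  - apply Rmult_le_reg_l with Q; nra.
  - assert (Hv : forall k, (k < N)%nat -> v k = 0).
    { intros k Hk.
      assert (v k ^ 2 <= Q) by
        (apply (fsum_term N (fun k => v k ^ 2)); auto; intros; apply pow2_ge_0).
      nra. }
    unfold T. rewrite fsum_zero; [rewrite <- HQ0; nra|].
    intros k Hk. rewrite Hv; auto; ring.
Qed.

Module GeneralizedInverse.
Import all_boot all_algebra Rstruct GRing.Theory.
Local Open Scope ring_scope.

Lemma fsum_big n (f : nat -> R) : fsum n f = \sum_(k < n) f k.
Proof.
elim: n => [|n IH] /=; first by rewrite big_ord0.
by rewrite big_ord_recr /= IH.
Qed.

Lemma generalized_inverse (M N : nat) (A : nat -> nat -> R) :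
  exists G : nat -> nat -> R,
  forall i j, (i < M)%coq_nat -> (j < N)%coq_nat ->
  fsum N (fun k => A i k * fsum M (fun l => G k l * A l j)) = A i j.
Proof.
pose Am : 'M[R]_(M, N) := \matrix_(i, j) A i j.
pose Gm := pinvmx Am.
exists (fun k l => match (k < N)%N =P true, (l < M)%N =P true with
   | ReflectT hk, ReflectT hl => Gm (Ordinal hk) (Ordinal hl) | _, _ => 0 end).
move=> i j /ltP hi /ltP hj.
have AGA : Am *m (Gm *m Am) = Am by rewrite mulmxA mulmxKpV.
clearbody Gm.
have := congr1 (fun B : 'M[R]_(M, N) => B (Ordinal hi) (Ordinal hj)) AGA.
rewrite /= !mxE => <-.
rewrite fsum_big; apply: eq_bigr => k _.
rewrite mxE /= fsum_big !mxE; congr (_ * _).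
apply: eq_bigr => l _ /=; rewrite mxE.
case: ((k < N)%N =P true) => [hk|]; last by rewrite ltn_ord.
case: ((l < M)%N =P true) => [hl|]; last by rewrite ltn_ord.
by congr (Gm _ _ * _); exact: val_inj.
Qed.
End GeneralizedInverse.

Lemma fsum_mat_vec_assoc M N (g : nat -> R) (B : nat -> nat -> R) (y : nat -> R) :
  fsum M (fun l => g l * fsum N (fun m => B l m * y m))
  = fsum N (fun m => fsum M (fun l => g l * B l m) * y m).
Proof.
  rewrite (fsum_ext M _ (fun l => fsum N (fun m => g l * B l m * y m))).
  - rewrite fsum_swap. apply fsum_ext. intros m Hm.
    rewrite <- fsum_scalr. reflexivity.
  - intros l Hl. rewrite <- fsum_scal. apply fsum_ext. intros; ring.
Qed.

(* If A G A = A, then a vector y with A y small lies close to the kernel of A: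
   y - G A y is in ker A and differs from y by at most |G| |A y|. *)
Lemma near_kernel M N (A G : nat -> nat -> R) :
  (forall i j, (i < M)%nat -> (j < N)%nat ->
    fsum N (fun k => A i k * fsum M (fun l => G k l * A l j)) = A i j) ->
  forall delta, 0 < delta -> exists eps, 0 < eps /\ forall y : nat -> R,
    (forall i, (i < M)%nat -> Rabs (fsum N (fun j => A i j * y j)) <= eps) ->
    exists k : nat -> R,
      (forall i, (i < M)%nat -> fsum N (fun j => A i j * k j) = 0) /\
      (forall j, (j < N)%nat -> Rabs (k j - y j) <= delta).
Proof.
  intros HG delta Hdelta.
  set (Grow := fun k => fsum M (fun l => Rabs (G k l))).
  set (Gs := fsum N Grow).
  assert (HGrow : forall k, (k < N)%nat -> 0 <= Grow k <= Gs).
  { intros k Hk. assert (Hnn : forall k, 0 <= Grow k)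
      by (intros; apply fsum_nonneg; intros; apply Rabs_pos).
    split; [auto|]. apply (fsum_term N Grow); auto. }
  assert (HGs : 0 <= Gs) by (apply fsum_nonneg; intros k Hk; apply HGrow; auto).
  exists (delta / (Gs + 1)). split; [apply Rdiv_lt_0_compat; lra|].
  intros y Hy. set (p := fun l => fsum N (fun m => A l m * y m)).
  exists (fun j => y j - fsum M (fun l => G j l * p l)). split.
  - intros i Hi.
    assert (HAGA : fsum N (fun j => A i j * fsum M (fun l => G j l * p l)) = p i).
    { unfold p.
      rewrite (fsum_ext N _ (fun j => A i j *
                 fsum N (fun m => fsum M (fun l => G j l * A l m) * y m)))
        by (intros; now rewrite fsum_mat_vec_assoc).
      rewrite fsum_mat_vec_assoc. apply fsum_ext. intros m Hm. now rewrite HG. }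
    rewrite (fsum_ext N _ (fun j => A i j * y j
                                    - A i j * fsum M (fun l => G j l * p l)))
      by (intros; ring).
    rewrite fsum_minus, HAGA. unfold p. ring.
  - intros j Hj.
    replace (y j - fsum M (fun l => G j l * p l) - y j)
      with (- fsum M (fun l => G j l * p l)) by ring.
    rewrite Rabs_Ropp. eapply Rle_trans; [apply fsum_abs|].
    apply Rle_trans with (Grow j * (delta / (Gs + 1))).
    + unfold Grow. rewrite <- fsum_scalr. apply fsum_le. intros l Hl.
      rewrite Rabs_mult. apply Rmult_le_compat_l; [apply Rabs_pos|apply Hy; auto].
    + destruct (HGrow j Hj) as [H0 H1].
      replace delta with ((Gs + 1) * (delta / (Gs + 1))) at 2 by (field; lra).
      apply Rmult_le_compat_r; [apply Rlt_le, Rdiv_lt_0_compat|]; lra.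
Qed.

Lemma der_eq (f : R -> R) (x a b : R) :
  is_derive f x a -> a = b -> is_derive f x b.
Proof. now intros H <-. Qed.

Lemma der_const (c x : R) : is_derive (fun _ => c) x 0.
Proof. rewrite is_derive_Reals; apply derivable_pt_lim_const. Qed.

Lemma der_plus (f g : R -> R) x a b :
  is_derive f x a -> is_derive g x b -> is_derive (fun s => f s + g s) x (a + b).
Proof. rewrite !is_derive_Reals; apply derivable_pt_lim_plus. Qed.

Lemma der_minus (f g : R -> R) x a b :
  is_derive f x a -> is_derive g x b -> is_derive (fun s => f s - g s) x (a - b).
Proof. rewrite !is_derive_Reals; apply derivable_pt_lim_minus. Qed.

Lemma der_mult (f g : R -> R) x a b :
  is_derive f x a -> is_derive g x b ->
  is_derive (fun s => f s * g s) x (a * g x + f x * b).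
Proof. rewrite !is_derive_Reals; apply derivable_pt_lim_mult. Qed.

Lemma der_scal (f : R -> R) c x a :
  is_derive f x a -> is_derive (fun s => c * f s) x (c * a).
Proof.
  intros H. eapply der_eq; [apply (der_mult (fun _ => c) f); [apply der_const|exact H]|].
  ring.
Qed.

Lemma der_pow (f : R -> R) n x a :
  is_derive f x a -> is_derive (fun s => f s ^ n) x (INR n * f x ^ pred n * a).
Proof. intros H. eapply der_eq; [apply (is_derive_pow f n x a H)|]. simpl; ring. Qed.

Lemma der_exp (f : R -> R) x a :
  is_derive f x a -> is_derive (fun s => exp (f s)) x (exp (f x) * a).
Proof.
  rewrite !is_derive_Reals. intros H.
  apply (derivable_pt_lim_comp f exp); [exact H|apply derivable_pt_lim_exp].
Qed.

Lemma der_ln (f : R -> R) x a :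
  0 < f x -> is_derive f x a -> is_derive (fun s => ln (f s)) x (a / f x).
Proof.
  rewrite !is_derive_Reals. intros Hpos H. unfold Rdiv. rewrite Rmult_comm.
  apply (derivable_pt_lim_comp f ln); [exact H|now apply derivable_pt_lim_ln].
Qed.

Lemma der_fsum n (F : R -> nat -> R) x dF :
  (forall k, (k < n)%nat -> is_derive (fun s => F s k) x (dF k)) ->
  is_derive (fun s => fsum n (F s)) x (fsum n dF).
Proof.
  induction n; simpl; intros H; [apply der_const|].
  apply (der_plus (fun s => fsum n (F s)) (fun s => F s n)); auto.
Qed.

Lemma lim_plus (f g : R -> R) a b :
  filterlim f (at_right 0) (locally a) -> filterlim g (at_right 0) (locally b) ->
  filterlim (fun x => f x + g x) (at_right 0) (locally (a + b)).
Proof. intros. eapply filterlim_comp_2; eauto. apply (filterlim_plus a b). Qed.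

Lemma lim_mult (f g : R -> R) a b :
  filterlim f (at_right 0) (locally a) -> filterlim g (at_right 0) (locally b) ->
  filterlim (fun x => f x * g x) (at_right 0) (locally (a * b)).
Proof. intros. eapply filterlim_comp_2; eauto. apply (filterlim_mult a b). Qed.

Lemma lim_fsum n (G : R -> nat -> R) a :
  (forall k, (k < n)%nat -> filterlim (fun x => G x k) (at_right 0) (locally (a k))) ->
  filterlim (fun x => fsum n (G x)) (at_right 0) (locally (fsum n a)).
Proof.
  induction n; simpl; intros H; [apply filterlim_const|].
  apply lim_plus; auto.
Qed.

Lemma lim_comp (f g : R -> R) a :
  filterlim f (at_right 0) (locally a) -> ex_derive g a ->
  filterlim (fun x => g (f x)) (at_right 0) (locally (g a)).
Proof.
  intros Hf Hg. eapply filterlim_comp; [exact Hf|].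
  now apply (@ex_derive_continuous R_AbsRing R_NormedModule).
Qed.

Lemma lim_pow (f : R -> R) a n :
  filterlim f (at_right 0) (locally a) ->
  filterlim (fun x => f x ^ n) (at_right 0) (locally (a ^ n)).
Proof.
  intros H. apply (lim_comp f (fun y => y ^ n)); auto.
  eexists. apply is_derive_pow, is_derive_id.
Qed.

Lemma nonincreasing_on (f : R -> R) a b : a < b ->
  (forall x, a <= x <= b -> exists d, is_derive f x d /\ d <= 0) -> f b <= f a.
Proof.
  intros Hab Hd.
  assert (HD : forall x, a <= x <= b -> is_derive f x (Derive f x) /\ Derive f x <= 0).
  { intros x Hx. destruct (Hd x Hx) as [d [H1 H2]].
    rewrite (is_derive_unique f x d H1). auto. }
  destruct (MVT_gen f a b (Derive f)) as [c [Hc E]];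
    rewrite ?Rmin_left, ?Rmax_right in * by lra.
  - intros x Hx. apply HD; lra.
  - intros x Hx. apply continuity_pt_filterlim.
    apply (@ex_derive_continuous R_AbsRing R_NormedModule).
    eexists; apply HD; lra.
  - assert (Derive f c <= 0) by (apply HD; lra). nra.
Qed.

Lemma nonincreasing_from0 (f : R -> R) :
  filterlim f (at_right 0) (locally (f 0)) ->
  (forall t, 0 < t -> exists d, is_derive f t d /\ d <= 0) ->
  forall t, 0 < t -> f t <= f 0.
Proof.
  intros Hlim Hd t Ht. apply Rnot_lt_le. intros Hlt.
  assert (Heps : 0 < f t - f 0) by lra.
  destruct (proj1 (filterlim_locally f (f 0)) Hlim (mkposreal _ Heps)) as [d Hnear].
  (* a time tau in (0, t) where f is still close to f 0 *)
  set (tau := Rmin (d / 2) (t / 2)).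
  assert (Htau : 0 < tau < t /\ tau < d).
  { pose proof (cond_pos d). pose proof (Rmin_l (d / 2) (t / 2)).
    pose proof (Rmin_r (d / 2) (t / 2)).
    assert (0 < tau) by (apply Rmin_pos; lra). unfold tau in *. lra. }
  assert (Hball : ball 0 d tau).
  { unfold ball; simpl; unfold AbsRing_ball, abs, minus, plus, opp; simpl.
    rewrite Ropp_0, Rplus_0_r, Rabs_pos_eq; lra. }
  specialize (Hnear tau Hball (proj1 (proj1 Htau))).
  unfold ball in Hnear; simpl in Hnear;
    unfold AbsRing_ball, abs, minus, plus, opp in Hnear; simpl in Hnear.
  apply Rabs_lt_between in Hnear.
  assert (f t <= f tau) by (apply nonincreasing_on; [lra|intros; apply Hd; lra]).
  lra.
Qed.

Lemma constant_from0 (f : R -> R) :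
  filterlim f (at_right 0) (locally (f 0)) ->
  (forall t, 0 < t -> is_derive f t 0) -> forall t, 0 < t -> f t = f 0.
Proof.
  intros Hlim Hd t Ht. apply Rle_antisym.
  - apply nonincreasing_from0; auto. intros s Hs. exists 0. split; [auto|lra].
  - cut (- f t <= - f 0); [lra|].
    apply (nonincreasing_from0 (fun s => - f s)); auto.
    + apply (lim_comp f Ropp (f 0) Hlim). exists (-1). auto_derive; auto; lra.
    + intros s Hs. exists (- 0). split; [|lra].
      rewrite is_derive_Reals. apply derivable_pt_lim_opp.
      rewrite <- is_derive_Reals. auto.
Qed.

Definition residual L N (A : nat -> nat -> R) (b x : nat -> R) (i : nat) : R :=
  fsum N (fun j => A i j * x j ^ L) - b i.

Definition loss_grad L M N (A : nat -> nat -> R) (b x : nat -> R) (k : nat) : R :=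
  x k ^ pred L * fsum M (fun i => residual L N A b x i * A i k).

Lemma loss_residual L M N A b x :
  loss L M N A b x = / (2 * INR L) * fsum M (fun i => residual L N A b x i ^ 2).
Proof. reflexivity. Qed.

Lemma loss_chain_rule L M N A b (X : R -> nat -> R) s0 (dX : nat -> R) :
  L <> 0%nat ->
  (forall k, (k < N)%nat -> is_derive (fun s => X s k) s0 (dX k)) ->
  is_derive (fun s => loss L M N A b (X s)) s0
    (fsum N (fun k => loss_grad L M N A b (X s0) k * dX k)).
Proof.
  intros HL Hd. unfold loss. eapply der_eq.
  { apply der_scal, der_fsum. intros i Hi.
    apply der_pow, der_minus; [|apply der_const].
    apply der_fsum. intros j Hj. apply der_scal, der_pow, Hd, Hj. }
  assert (HL0 : INR L <> 0) by (apply not_0_INR; auto).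
  set (rho := residual L N A b (X s0)).
  set (w := fun j => X s0 j ^ pred L * dX j).
  (* both sides equal  sum_i sum_j rho_i A_ij w_j *)
  transitivity (fsum M (fun i => rho i * fsum N (fun j => A i j * w j))).
  - rewrite <- fsum_scal. apply fsum_ext. intros i Hi.
    rewrite (fsum_ext N (fun j => A i j * (INR L * X s0 j ^ pred L * dX j))
                        (fun j => INR L * (A i j * w j))) by (intros; unfold w; ring).
    rewrite fsum_scal. unfold rho, residual. simpl INR; simpl pred. field. lra.
  - rewrite fsum_mat_vec_assoc. apply fsum_ext. intros k Hk.
    unfold loss_grad, w. fold rho. ring.
Qed.

Definition wn_point N (r : R) (u : nat -> R) : nat -> R :=
  fun k => r / norm2 N u * u k.

Definition wn_grad L M N A b (r : R) (u : nat -> R) : nat -> R :=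
  loss_grad L M N A b (wn_point N r u).

Definition wn_radial L M N A b (r : R) (u : nat -> R) : R :=
  fsum N (fun k => wn_grad L M N A b r u k * u k).

Lemma wn_loss_deriv_r L M N A b r u : L <> 0%nat -> norm2 N u <> 0 ->
  is_derive (fun s => wn_loss L M N A b s u) r
    (wn_radial L M N A b r u / norm2 N u).
Proof.
  intros HL Hn. unfold wn_loss. eapply der_eq.
  { apply (loss_chain_rule L M N A b (fun s k => s / norm2 N u * u k) r
             (fun k => u k / norm2 N u) HL).
    intros k Hk. auto_derive; [auto|field; auto]. }
  unfold wn_radial, Rdiv. rewrite <- fsum_scalr. apply fsum_ext. intros k Hk.
  unfold wn_grad, wn_point, Rdiv. ring.
Qed.

Lemma upd_same (u : nat -> R) j : upd u j (u j) = u.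
Proof.
  apply functional_extensionality. intros k. unfold upd.
  destruct (Nat.eqb_spec k j); congruence.
Qed.

Lemma upd_sq_sum N u j s : (j < N)%nat ->
  fsum N (fun k => upd u j s k ^ 2) = fsum N (fun k => u k ^ 2) - u j ^ 2 + s ^ 2.
Proof.
  induction N as [|N IH]; cbn [fsum]; intros Hj; [lia|].
  unfold upd at 2. destruct (Nat.eqb_spec N j) as [->|Hne].
  - rewrite (fsum_ext j (fun k => upd u j s k ^ 2) (fun k => u k ^ 2)); [lra|].
    intros k Hk. unfold upd. destruct (Nat.eqb_spec k j); [lia|auto].
  - rewrite IH by lia. lra.
Qed.

Lemma wn_point_deriv_u N r u j k : (j < N)%nat -> 0 < fsum N (fun k => u k ^ 2) ->
  is_derive (fun s => wn_point N r (upd u j s) k) (u j)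
    (r / norm2 N u * (if Nat.eqb k j then 1 else 0)
     - r * u k * u j / (fsum N (fun k => u k ^ 2) * norm2 N u)).
Proof.
  intros Hj HQ. set (Q := fsum N (fun k => u k ^ 2)) in *.
  assert (Hnorm : forall s, norm2 N (upd u j s) = sqrt (Q - u j ^ 2 + s ^ 2))
    by (intros s; unfold norm2; now rewrite upd_sq_sum).
  assert (Hsq : 0 < sqrt Q) by (apply sqrt_lt_R0; auto).
  assert (HsqQ : sqrt Q * sqrt Q = Q) by (apply sqrt_sqrt; lra).
  change (norm2 N u) with (sqrt Q).
  apply (is_derive_ext (fun s => r / sqrt (Q - u j ^ 2 + s ^ 2) * upd u j s k));
    [intros s; unfold wn_point; now rewrite Hnorm|].
  unfold upd. destruct (Nat.eqb_spec k j) as [->|Hne].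
  - auto_derive; replace (Q - u j * (u j * 1) + u j * (u j * 1)) with Q by ring;
      [repeat split; lra|].
    rewrite HsqQ. field. lra.
  - auto_derive; replace (Q - u j * (u j * 1) + u j * (u j * 1)) with Q by ring;
      [repeat split; lra|].
    rewrite HsqQ. field. lra.
Qed.

Lemma wn_loss_deriv_u L M N A b r u j : L <> 0%nat -> (j < N)%nat ->
  0 < fsum N (fun k => u k ^ 2) ->
  is_derive (fun s => wn_loss L M N A b r (upd u j s)) (u j)
    (r / norm2 N u * wn_grad L M N A b r u j
     - r * u j / (fsum N (fun k => u k ^ 2) * norm2 N u) * wn_radial L M N A b r u).
Proof.
  intros HL Hj HQ. unfold wn_loss. eapply der_eq.
  { apply (loss_chain_rule L M N A b (fun s => wn_point N r (upd u j s)) (u j)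
      (fun k => r / norm2 N u * (if Nat.eqb k j then 1 else 0)
                - r * u k * u j / (fsum N (fun k => u k ^ 2) * norm2 N u)) HL).
    intros k Hk. apply wn_point_deriv_u; auto. }
  rewrite upd_same. fold (wn_grad L M N A b r u).
  set (g := wn_grad L M N A b r u).
  set (c := r * u j / (fsum N (fun k => u k ^ 2) * norm2 N u)).
  rewrite (fsum_ext N _ (fun k => r / norm2 N u * (if Nat.eqb k j then g k else 0)
                                  - c * (g k * u k))).
  - rewrite fsum_minus, !fsum_scal, fsum_delta by auto. reflexivity.
  - intros k Hk. unfold c. destruct (Nat.eqb k j); unfold Rdiv; ring.
Qed.

Lemma kernel_perp_range M N (A : nat -> nat -> R) (z e : nat -> R) :
  (forall i, (i < M)%nat -> fsum N (fun j => A i j * z j) = 0) ->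
  fsum N (fun j => z j * fsum M (fun i => e i * A i j)) = 0.
Proof.
  intros Hz.
  rewrite (fsum_ext N _ (fun j => fsum M (fun i => e i * (A i j * z j))))
    by (intros; rewrite <- fsum_scal; apply fsum_ext; intros; ring).
  rewrite fsum_swap. apply fsum_zero. intros i Hi.
  rewrite fsum_scal, Hz; auto; ring.
Qed.

Lemma scale_le_of_large_factor (X p bi E B eps : R) :
  0 < eps -> eps < Rabs p -> Rabs (X * p - bi) <= E -> Rabs bi <= B ->
  X <= (E + B) / eps.
Proof.
  intros Heps Hp HE HB.
  assert (HXp : Rabs X * Rabs p <= E + B).
  { rewrite <- Rabs_mult. replace (X * p) with ((X * p - bi) + bi) by ring.
    eapply Rle_trans; [apply Rabs_triang|lra]. }
  apply Rle_trans with (Rabs X); [apply Rle_abs|].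
  apply Rmult_le_reg_r with eps; [exact Heps|].
  unfold Rdiv. rewrite Rmult_assoc, Rinv_l, Rmult_1_r by lra.
  pose proof (Rabs_pos X). nra.
Qed.

Lemma ln_monotone x y : 0 < x -> x <= y -> ln x <= ln y.
Proof. intros Hx [Hlt|<-]; [apply Rlt_le, ln_increasing|]; lra. Qed.

Lemma ln_abs_le a x b : 0 < a -> a <= x -> x <= b -> Rabs (ln x) <= Rabs (ln a) + Rabs (ln b).
Proof.
  intros Ha Hax Hxb.
  assert (ln a <= ln x) by (apply ln_monotone; auto).
  assert (ln x <= ln b) by (apply ln_monotone; lra).
  unfold Rabs; repeat destruct Rcase_abs; lra.
Qed.

Lemma le_of_pow_le (L : nat) (x K : R) :
  (L = 1%nat \/ L = 2%nat) -> x ^ L <= K -> x <= 1 + Rabs K.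
Proof.
  intros [-> | ->] H; simpl in H; pose proof (Rle_abs K); nra.
Qed.

Section WeightNormalizedFlow.

Variables (L M N : nat) (A : nat -> nat -> R) (b : nat -> R) (eta c : R)
  (r : R -> R) (u : R -> nat -> R).

Hypothesis HL : L = 1%nat \/ L = 2%nat.
Hypothesis HN : (0 < N)%nat.
Hypothesis Heta : 0 < eta.
Hypothesis Hr_cont : filterlim r (at_right 0) (locally (r 0)).
Hypothesis Hu_cont : forall j, (j < N)%nat ->
  filterlim (fun t => u t j) (at_right 0) (locally (u 0 j)).
Hypothesis Hflow_r : forall t, 0 < t -> exists g,
  is_derive (fun s => wn_loss L M N A b s (u t)) (r t) g /\
  is_derive r t (- eta * g).
Hypothesis Hflow_u : forall t j, 0 < t -> (j < N)%nat -> exists g,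
  is_derive (fun s => wn_loss L M N A b (r t) (upd (u t) j s)) (u t j) g /\
  is_derive (fun tau => u tau j) t (- 1 * g).
Hypothesis Hc : 0 < c.
Hypothesis Hu_away : forall t j, 0 <= t -> (j < N)%nat -> c <= Rabs (u t j).

Lemma L_neq0 : L <> 0%nat.
Proof. destruct HL; lia. Qed.

Lemma u_neq0 t j : 0 <= t -> (j < N)%nat -> u t j <> 0.
Proof.
  intros Ht Hj E. pose proof (Hu_away t j Ht Hj) as H.
  rewrite E, Rabs_R0 in H. lra.
Qed.

Definition sqnorm (t : R) : R := fsum N (fun k => u t k ^ 2).
Definition grad (t : R) : nat -> R := wn_grad L M N A b (r t) (u t).
Definition radial (t : R) : R := wn_radial L M N A b (r t) (u t).

Lemma sqnorm_pos t : 0 <= t -> 0 < sqnorm t.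
Proof.
  intros Ht. apply Rlt_le_trans with (u t 0%nat ^ 2).
  - apply pow2_gt_0, u_neq0; auto.
  - apply (fsum_term N (fun k => u t k ^ 2)); auto. intros; apply pow2_ge_0.
Qed.

Lemma norm_pos t : 0 <= t -> 0 < norm2 N (u t).
Proof. intros Ht. apply sqrt_lt_R0, sqnorm_pos, Ht. Qed.

Lemma flow_r t : 0 < t -> is_derive r t (- eta * (radial t / norm2 N (u t))).
Proof.
  intros Ht. destruct (Hflow_r t Ht) as [g [Hg Hr]].
  pose proof (wn_loss_deriv_r L M N A b (r t) (u t) L_neq0
                (Rgt_not_eq _ _ (norm_pos t (Rlt_le _ _ Ht)))) as Hg'.
  pose proof (is_derive_unique _ _ _ Hg) as E.
  rewrite (is_derive_unique _ _ _ Hg') in E. subst g. exact Hr.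
Qed.

Lemma flow_u t j : 0 < t -> (j < N)%nat ->
  is_derive (fun tau => u tau j) t
    (- (r t / norm2 N (u t) * grad t j
        - r t * u t j / (sqnorm t * norm2 N (u t)) * radial t)).
Proof.
  intros Ht Hj. destruct (Hflow_u t j Ht Hj) as [g [Hg Hu]].
  pose proof (wn_loss_deriv_u L M N A b (r t) (u t) j L_neq0 Hj
                (sqnorm_pos t (Rlt_le _ _ Ht))) as Hg'.
  pose proof (is_derive_unique _ _ _ Hg) as E.
  rewrite (is_derive_unique _ _ _ Hg') in E. subst g.
  eapply der_eq; [exact Hu|]. unfold sqnorm, grad, radial. ring.
Qed.

(* The velocity of u is orthogonal to u, so |u| is conserved. *)
Lemma sqnorm_deriv t : 0 < t -> is_derive sqnorm t 0.
Proof.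
  intros Ht. unfold sqnorm. eapply der_eq.
  { apply (der_fsum N (fun s k => u s k ^ 2)). intros k Hk.
    apply der_pow, flow_u; auto. }
  pose proof (norm_pos t (Rlt_le _ _ Ht)). pose proof (sqnorm_pos t (Rlt_le _ _ Ht)).
  set (a := r t / norm2 N (u t)).
  set (e := r t / (sqnorm t * norm2 N (u t)) * radial t).
  rewrite (fsum_ext N _ (fun k => (-2 * a) * (grad t k * u t k) + (2 * e) * u t k ^ 2))
    by (intros; unfold a, e; simpl; field; lra).
  rewrite fsum_plus, !fsum_scal.
  change (fsum N (fun k => grad t k * u t k)) with (radial t). fold (sqnorm t).
  unfold e, a. field. lra.
Qed.

Lemma sqnorm_conserved t : 0 <= t -> sqnorm t = sqnorm 0.
Proof.
  intros [Ht| <-]; [|reflexivity].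
  apply (constant_from0 sqnorm); [|intros s Hs; now apply sqnorm_deriv|exact Ht].
  apply (lim_fsum N (fun t k => u t k ^ 2)). intros k Hk. apply lim_pow, Hu_cont, Hk.
Qed.

Definition rho0 : R := norm2 N (u 0).

Lemma rho0_pos : 0 < rho0.
Proof. apply norm_pos; lra. Qed.

Lemma norm_conserved t : 0 <= t -> norm2 N (u t) = rho0.
Proof.
  intros Ht. unfold rho0, norm2. fold (sqnorm t) (sqnorm 0).
  now rewrite sqnorm_conserved.
Qed.

Lemma sqnorm_rho0 t : 0 <= t -> sqnorm t = rho0 ^ 2.
Proof.
  intros Ht. rewrite sqnorm_conserved by auto. unfold rho0, norm2.
  rewrite pow2_sqrt; [reflexivity|]. apply Rlt_le, (sqnorm_pos 0); lra.
Qed.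

Definition flow_loss (t : R) : R := loss L M N A b (fun k => r t / rho0 * u t k).

Lemma grad_rho0 t k : 0 <= t ->
  loss_grad L M N A b (fun k => r t / rho0 * u t k) k = grad t k.
Proof. intros Ht. unfold grad, wn_grad, wn_point. now rewrite norm_conserved. Qed.

(* d/dt flow_loss = - eta <g,u>^2/rho0^2 - (r/rho0^2)^2 (|g|^2 rho0^2 - <g,u>^2),
   which is nonpositive by Cauchy-Schwarz. *)
Lemma flow_loss_deriv t : 0 < t -> exists d, is_derive flow_loss t d /\ d <= 0.
Proof.
  intros Ht. pose proof (norm_conserved t (Rlt_le _ _ Ht)) as Hn.
  pose proof (sqnorm_rho0 t (Rlt_le _ _ Ht)) as HQ. pose proof rho0_pos as Hrho.
  eexists. split.
  { unfold flow_loss.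
    eapply (loss_chain_rule L M N A b (fun s k => r s / rho0 * u s k) t _ L_neq0).
    intros k Hk. unfold Rdiv. apply (der_mult (fun s => r s * / rho0) (fun s => u s k)).
    - apply (der_mult r (fun _ => / rho0)); [apply flow_r; auto|apply der_const].
    - apply flow_u; auto. }
  set (T := radial t). set (S := fsum N (fun k => grad t k ^ 2)).
  rewrite (fsum_ext N _ (fun k => (- eta * T / rho0 ^ 2 + r t ^ 2 * T / rho0 ^ 4)
                                  * (grad t k * u t k) - (r t / rho0) ^ 2 * grad t k ^ 2)).
  2:{ intros k Hk. rewrite grad_rho0, Hn, HQ by lra. unfold T. field. lra. }
  rewrite fsum_minus, !fsum_scal. change (fsum N (fun k => grad t k * u t k)) with T.
  fold S.
  assert (HCS : T ^ 2 <= S * rho0 ^ 2).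
  { rewrite <- HQ. apply fsum_cauchy_schwarz. }
  replace ((- eta * T / rho0 ^ 2 + r t ^ 2 * T / rho0 ^ 4) * T - (r t / rho0) ^ 2 * S)
    with (- eta * (T / rho0) ^ 2 - (r t / rho0 ^ 2) ^ 2 * (S * rho0 ^ 2 - T ^ 2))
    by (field; lra).
  assert (0 <= (T / rho0) ^ 2) by apply pow2_ge_0.
  assert (0 <= (r t / rho0 ^ 2) ^ 2) by apply pow2_ge_0.
  nra.
Qed.

Lemma flow_loss_cont : filterlim flow_loss (at_right 0) (locally (flow_loss 0)).
Proof.
  unfold flow_loss, loss. apply lim_mult; [apply filterlim_const|].
  apply lim_fsum. intros i Hi. apply lim_pow.
  unfold Rminus. apply lim_plus; [|apply filterlim_const].
  apply lim_fsum. intros j Hj. apply lim_mult; [apply filterlim_const|].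
  apply lim_pow. apply lim_mult; [|apply Hu_cont, Hj].
  apply (lim_comp r (fun y => y / rho0)); [exact Hr_cont|].
  pose proof rho0_pos. eexists. auto_derive; [lra|reflexivity].
Qed.

Lemma flow_loss_le t : 0 <= t -> flow_loss t <= flow_loss 0.
Proof.
  intros [Ht| <-]; [|lra].
  apply nonincreasing_from0; [exact flow_loss_cont|exact flow_loss_deriv|exact Ht].
Qed.

Definition backprop (t : R) (k : nat) : R :=
  fsum M (fun i => residual L N A b (wn_point N (r t) (u t)) i * A i k).

Lemma grad_backprop t k :
  grad t k = (r t / norm2 N (u t) * u t k) ^ pred L * backprop t k.
Proof. reflexivity. Qed.

Section KernelInvariants.
(* For z in ker A, the flow preserves a quantity coupling <z, u> with r. *)
Variable z : nat -> R.
Hypothesis Hz : forall i, (i < M)%nat -> fsum N (fun j => A i j * z j) = 0.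

Lemma backprop_perp t : fsum N (fun j => z j * backprop t j) = 0.
Proof. apply kernel_perp_range, Hz. Qed.

Definition invariant1 (t : R) : R :=
  fsum N (fun j => z j * u t j) * exp (r t ^ 2 / (2 * eta * rho0 ^ 2)).

Lemma invariant1_deriv t : L = 1%nat -> 0 < t -> is_derive invariant1 t 0.
Proof.
  intros HL1 Ht. pose proof (norm_conserved t (Rlt_le _ _ Ht)) as Hn.
  pose proof (sqnorm_rho0 t (Rlt_le _ _ Ht)) as HQ. pose proof rho0_pos.
  unfold invariant1. eapply der_eq.
  { apply (der_mult (fun s => fsum N (fun j => z j * u s j))
                    (fun s => exp (r s ^ 2 / (2 * eta * rho0 ^ 2)))).
    - apply der_fsum. intros j Hj. apply der_scal, flow_u; auto.
    - apply der_exp. unfold Rdiv.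
      apply (der_mult (fun s => r s ^ 2) (fun _ => / (2 * eta * rho0 ^ 2))).
      + apply der_pow, flow_r, Ht.
      + apply der_const. }
  (* for L = 1 the gradient is A^T (residual), orthogonal to z *)
  assert (Hzg : fsum N (fun j => z j * grad t j) = 0).
  { rewrite <- (backprop_perp t). apply fsum_ext. intros j Hj.
    rewrite grad_backprop, HL1. simpl. ring. }
  set (T := radial t). set (Z := fsum N (fun j => z j * u t j)).
  rewrite (fsum_ext N _ (fun j => (- (r t / rho0)) * (z j * grad t j)
                                  + (r t / rho0 ^ 3 * T) * (z j * u t j)))
    by (intros; rewrite Hn, HQ; unfold T; field; lra).
  rewrite fsum_plus, !fsum_scal, Hzg. fold Z. rewrite Hn. simpl. field. lra.
Qed.

Lemma invariant1_conserved t : L = 1%nat -> 0 <= t -> invariant1 t = invariant1 0.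
Proof.
  intros HL1 [Ht| <-]; [|reflexivity].
  apply constant_from0; [|intros s Hs; now apply invariant1_deriv|exact Ht].
  pose proof rho0_pos. unfold invariant1. apply lim_mult.
  - apply lim_fsum. intros j Hj. apply lim_mult; [apply filterlim_const|apply Hu_cont, Hj].
  - apply (lim_comp r (fun y => exp (y ^ 2 / (2 * eta * rho0 ^ 2)))); [exact Hr_cont|].
    eexists. auto_derive; [nra|reflexivity].
Qed.

Definition invariant2 (t : R) : R :=
  fsum N (fun j => z j * ln (u t j ^ 2)) + fsum N z * (r t ^ 2 / (eta * rho0 ^ 2)).

Lemma invariant2_deriv t : L = 2%nat -> 0 < t -> is_derive invariant2 t 0.
Proof.
  intros HL2 Ht. pose proof (norm_conserved t (Rlt_le _ _ Ht)) as Hn.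
  pose proof (sqnorm_rho0 t (Rlt_le _ _ Ht)) as HQ. pose proof rho0_pos.
  unfold invariant2. eapply der_eq.
  { apply (der_plus (fun s => fsum N (fun j => z j * ln (u s j ^ 2)))
                    (fun s => fsum N z * (r s ^ 2 / (eta * rho0 ^ 2)))).
    - apply der_fsum. intros j Hj. apply der_scal, der_ln.
      + apply pow2_gt_0, u_neq0; auto; lra.
      + apply der_pow, flow_u; auto.
    - apply der_scal. unfold Rdiv.
      apply (der_mult (fun s => r s ^ 2) (fun _ => / (eta * rho0 ^ 2))).
      + apply der_pow, flow_r, Ht.
      + apply der_const. }
  set (T := radial t).
  (* for L = 2, d/dt ln(u_j^2) = -2 (r/rho0)^2 (A^T residual)_j + 2 r T / rho0^3 *)
  rewrite (fsum_ext N _ (fun j => (-2 * (r t / rho0) ^ 2) * (z j * backprop t j)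
                                  + (2 * r t * T / rho0 ^ 3) * z j)).
  - rewrite fsum_plus, !fsum_scal, backprop_perp. rewrite Hn. simpl. field. lra.
  - intros j Hj. assert (u t j <> 0) by (apply u_neq0; auto; lra).
    rewrite grad_backprop, HL2, Hn, HQ. unfold T. simpl. field. lra.
Qed.

Lemma invariant2_conserved t : L = 2%nat -> 0 <= t -> invariant2 t = invariant2 0.
Proof.
  intros HL2 [Ht| <-]; [|reflexivity].
  apply constant_from0; [|intros s Hs; now apply invariant2_deriv|exact Ht].
  pose proof rho0_pos. unfold invariant2. apply lim_plus.
  - apply lim_fsum. intros j Hj. apply lim_mult; [apply filterlim_const|].
    apply (lim_comp (fun t => u t j) (fun y => ln (y ^ 2))); [apply Hu_cont, Hj|].
    assert (0 < u 0 j ^ 2) by (apply pow2_gt_0, u_neq0; auto; lra).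
    eexists. auto_derive; [lra|reflexivity].
  - apply lim_mult; [apply filterlim_const|].
    apply (lim_comp r (fun y => y ^ 2 / (eta * rho0 ^ 2))); [exact Hr_cont|].
    eexists. auto_derive; [nra|reflexivity].
Qed.

End KernelInvariants.

Lemma u_le_rho0 t j : 0 <= t -> (j < N)%nat -> Rabs (u t j) <= rho0.
Proof.
  intros Ht Hj. rewrite <- (norm_conserved t Ht), <- sqrt_Rsqr_abs.
  apply sqrt_le_1_alt. unfold Rsqr. replace (u t j * u t j) with (u t j ^ 2) by ring.
  apply (fsum_term N (fun k => u t k ^ 2)); auto. intros; apply pow2_ge_0.
Qed.

Lemma sum_sq_normalized t : 0 <= t -> fsum N (fun j => (u t j / rho0) ^ 2) = 1.
Proof.
  intros Ht. pose proof rho0_pos.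
  rewrite (fsum_ext N _ (fun j => / rho0 ^ 2 * u t j ^ 2)) by (intros; field; lra).
  rewrite fsum_scal. fold (sqnorm t). rewrite sqnorm_rho0 by auto. field. lra.
Qed.

Definition dir (t : R) (j : nat) : R := (u t j / rho0) ^ L.

Lemma residual_dir t i : residual L N A b (fun k => r t / rho0 * u t k) i
                         = r t ^ L * fsum N (fun j => A i j * dir t j) - b i.
Proof.
  unfold residual, dir. rewrite <- fsum_scal. f_equal. apply fsum_ext. intros j Hj.
  unfold Rdiv. rewrite !Rpow_mult_distr. ring.
Qed.

Lemma dir_le_1 t j : 0 <= t -> (j < N)%nat -> Rabs (dir t j) <= 1.
Proof.
  intros Ht Hj. pose proof rho0_pos. unfold dir. rewrite <- RPow_abs.
  rewrite <- (pow1 L). apply pow_incr. split; [apply Rabs_pos|].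
  unfold Rdiv. rewrite Rabs_mult, Rabs_inv, (Rabs_pos_eq rho0) by lra.
  apply Rmult_le_reg_r with rho0; [lra|].
  rewrite Rmult_assoc, Rinv_l, Rmult_1_l, Rmult_1_r by lra. apply u_le_rho0; auto.
Qed.

Definition residual_bound : R := 1 + 2 * INR L * flow_loss 0.

Lemma residual_le t i : 0 <= t -> (i < M)%nat ->
  Rabs (residual L N A b (fun k => r t / rho0 * u t k) i) <= residual_bound.
Proof.
  intros Ht Hi. set (e := residual L N A b (fun k => r t / rho0 * u t k)).
  assert (HL0 : 0 < INR L) by (apply lt_0_INR; destruct HL; lia).
  assert (Hsq : e i ^ 2 <= 2 * INR L * flow_loss 0).
  { apply Rle_trans with (fsum M (fun i => e i ^ 2)).
    - apply (fsum_term M (fun i => e i ^ 2)); auto. intros; apply pow2_ge_0.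
    - pose proof (flow_loss_le t Ht) as Hle. unfold flow_loss in Hle.
      rewrite loss_residual in Hle. fold e in Hle.
      apply Rmult_le_reg_l with (/ (2 * INR L)); [apply Rinv_0_lt_compat; lra|].
      replace (/ (2 * INR L) * (2 * INR L * flow_loss 0)) with (flow_loss 0)
        by (field; lra). exact Hle. }
  unfold residual_bound. unfold Rabs; destruct Rcase_abs; nra.
Qed.

(* Tolerance for the distance of dir to ker A: small enough that N of them
   add up to at most 1/2. *)
Definition ker_tol : R := / (2 * (INR N + 1)).

Lemma ker_tol_facts : 0 < ker_tol /\ INR N * ker_tol <= / 2 /\ ker_tol <= 1.
Proof.
  pose proof (pos_INR N). unfold ker_tol.
  split; [apply Rinv_0_lt_compat; lra|split].
  - apply Rmult_le_reg_r with (2 * (INR N + 1)); [lra|].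
    rewrite Rmult_assoc, Rinv_l by lra. field_simplify; lra.
  - rewrite <- Rinv_1. apply Rinv_le_contravar; lra.
Qed.

Definition near_ker (t : R) (k : nat -> R) : Prop :=
  (forall i, (i < M)%nat -> fsum N (fun j => A i j * k j) = 0) /\
  (forall j, (j < N)%nat -> Rabs (k j - dir t j) <= ker_tol).

Lemma near_ker_coeff t k j : 0 <= t -> (j < N)%nat -> near_ker t k -> Rabs (k j) <= 2.
Proof.
  intros Ht Hj [_ Hk]. pose proof (Hk j Hj). pose proof (dir_le_1 t j Ht Hj).
  destruct ker_tol_facts as [_ [_ Htol]].
  replace (k j) with ((k j - dir t j) + dir t j) by ring.
  eapply Rle_trans; [apply Rabs_triang|lra].
Qed.

(* Either A dir(t) has a large entry, and then the bounded residual
   r^L (A dir)_i - b_i bounds r^L, or dir(t) is close to ker A. *)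
Lemma large_image_or_near_kernel :
  exists K, forall t, 0 <= t -> r t ^ L <= K \/ exists k, near_ker t k.
Proof.
  destruct (GeneralizedInverse.generalized_inverse M N A) as [G HG].
  destruct ker_tol_facts as [Htol _].
  destruct (near_kernel M N A G HG ker_tol Htol) as [eps [Heps Hnear]].
  set (B := fsum M (fun i => Rabs (b i))).
  exists ((residual_bound + B) / eps). intros t Ht.
  destruct (classic (exists i, (i < M)%nat /\ eps < Rabs (fsum N (fun j => A i j * dir t j))))
    as [[i [Hi Hlarge]]|Hsmall].
  - left. apply (scale_le_of_large_factor _ _ (b i) _ _ _ Heps Hlarge).
    + rewrite <- residual_dir. now apply residual_le.
    + apply (fsum_term M (fun i => Rabs (b i))); auto. intros; apply Rabs_pos.
  - right. apply Hnear. intros i Hi. apply Rnot_lt_le. intros H. apply Hsmall; eauto.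
Qed.

(* For L = 1 a vector k near ker A overlaps u(t) by at least rho0 / 2,
   since dir = u / rho0 has overlap exactly rho0. *)
Lemma overlap_lower_L1 t k : L = 1%nat -> 0 <= t -> near_ker t k ->
  rho0 / 2 <= fsum N (fun j => k j * u t j).
Proof.
  intros HL1 Ht [_ Hk]. pose proof rho0_pos. destruct ker_tol_facts as [Htol [HNtol _]].
  rewrite (fsum_ext N _ (fun j => / rho0 * (u t j ^ 2) + (k j - dir t j) * u t j))
    by (intros; unfold dir; rewrite HL1; field; lra).
  rewrite fsum_plus, fsum_scal. fold (sqnorm t). rewrite sqnorm_rho0 by auto.
  assert (Herr : Rabs (fsum N (fun j => (k j - dir t j) * u t j)) <= INR N * (ker_tol * rho0)).
  { apply fsum_abs_le. intros j Hj. rewrite Rabs_mult.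
    apply Rmult_le_compat; try apply Rabs_pos; auto. apply u_le_rho0; auto. }
  pose proof (Rle_abs (- fsum N (fun j => (k j - dir t j) * u t j))) as Hneg.
  rewrite Rabs_Ropp in Hneg.
  replace (/ rho0 * rho0 ^ 2) with rho0 by (field; lra). nra.
Qed.

Lemma overlap_upper t k : 0 <= t -> near_ker t k ->
  fsum N (fun j => k j * u 0 j) <= 2 * fsum N (fun j => Rabs (u 0 j)).
Proof.
  intros Ht Hk. eapply Rle_trans; [apply Rle_abs|].
  eapply Rle_trans; [apply fsum_abs|]. rewrite <- fsum_scal.
  apply fsum_le. intros j Hj. rewrite Rabs_mult.
  apply Rmult_le_compat_r; [apply Rabs_pos|]. now apply (near_ker_coeff t).
Qed.

(* L = 1: near ker A, the invariant <k, u> exp(r^2 / D) pins r down. *)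
Lemma radius_near_kernel_L1 : L = 1%nat ->
  exists K, forall t k, 0 < t -> near_ker t k -> r t <= K.
Proof.
  intros HL1. pose proof rho0_pos as Hrho.
  set (D := 2 * eta * rho0 ^ 2).
  assert (HD : 0 < D) by (unfold D; pose proof (pow_lt rho0 2 rho0_pos); nra).
  set (U0 := fsum N (fun j => Rabs (u 0 j))).
  set (Bexp := 4 * U0 * exp (r 0 ^ 2 / D) / rho0).
  exists (1 + D * Rabs (ln Bexp)). intros t k Ht Hk.
  pose proof (overlap_lower_L1 t k HL1 (Rlt_le _ _ Ht) Hk) as Hlow.
  pose proof (overlap_upper t k (Rlt_le _ _ Ht) Hk) as Hup. fold U0 in Hup.
  pose proof (invariant1_conserved k (proj1 Hk) t HL1 (Rlt_le _ _ Ht)) as Hinv.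
  unfold invariant1 in Hinv. fold D in Hinv.
  pose proof (exp_pos (r t ^ 2 / D)). pose proof (exp_pos (r 0 ^ 2 / D)).
  assert (Hexp : exp (r t ^ 2 / D) <= Bexp).
  { unfold Bexp. apply Rmult_le_reg_l with (rho0 / 2); [lra|].
    apply Rle_trans with (fsum N (fun j => k j * u t j) * exp (r t ^ 2 / D)); [nra|].
    rewrite Hinv. apply Rle_trans with (2 * U0 * exp (r 0 ^ 2 / D)); [nra|].
    right. field. lra. }
  assert (Hln : r t ^ 2 / D <= ln Bexp).
  { rewrite <- (ln_exp (r t ^ 2 / D)). now apply ln_monotone. }
  assert (r t ^ 2 <= D * Rabs (ln Bexp)).
  { pose proof (Rle_abs (ln Bexp)).
    replace (r t ^ 2) with (D * (r t ^ 2 / D)) by (field; lra). nra. }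
  nra.
Qed.

(* For L = 2, dir = (u / rho0)^2 sums to 1, so a vector near it sums to >= 1/2. *)
Lemma coeff_sum_lower_L2 t k : L = 2%nat -> 0 <= t -> near_ker t k ->
  / 2 <= fsum N k.
Proof.
  intros HL2 Ht [_ Hk]. destruct ker_tol_facts as [_ [HNtol _]].
  rewrite (fsum_ext N k (fun j => dir t j + (k j - dir t j))) by (intros; ring).
  rewrite fsum_plus. unfold dir at 1. rewrite HL2, sum_sq_normalized by auto.
  assert (Rabs (fsum N (fun j => k j - dir t j)) <= INR N * ker_tol)
    by (apply fsum_abs_le; auto).
  pose proof (Rle_abs (- fsum N (fun j => k j - dir t j))) as Hneg.
  rewrite Rabs_Ropp in Hneg. lra.
Qed.

Lemma ln_sq_u_bound t j : 0 <= t -> (j < N)%nat ->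
  Rabs (ln (u t j ^ 2)) <= Rabs (ln (c ^ 2)) + Rabs (ln (rho0 ^ 2)).
Proof.
  intros Ht Hj. pose proof (Hu_away t j Ht Hj). pose proof (u_le_rho0 t j Ht Hj).
  pose proof (Rabs_pos (u t j)).
  rewrite <- (pow2_abs (u t j)). apply ln_abs_le; [apply pow2_gt_0; lra|nra|].
  pose proof rho0_pos. nra.
Qed.

(* L = 2: near ker A, the invariant
   sum_j k_j ln(u_j^2) + (sum_j k_j) r^2 / D pins r down. *)
Lemma radius_near_kernel_L2 : L = 2%nat ->
  exists K, forall t k, 0 < t -> near_ker t k -> r t <= K.
Proof.
  intros HL2. pose proof rho0_pos. pose proof (pos_INR N).
  set (D := eta * rho0 ^ 2).
  assert (HD : 0 < D) by (unfold D; pose proof (pow_lt rho0 2 rho0_pos); nra).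
  set (Lam := Rabs (ln (c ^ 2)) + Rabs (ln (rho0 ^ 2))).
  set (Y0 := fsum N (fun j => 2 * Rabs (ln (u 0 j ^ 2))) + 2 * INR N * Rabs (r 0 ^ 2 / D)).
  exists (1 + 2 * D * (Y0 + INR N * (2 * Lam))). intros t k Ht Hk.
  pose proof (invariant2_conserved k (proj1 Hk) t HL2 (Rlt_le _ _ Ht)) as Hinv.
  unfold invariant2 in Hinv. fold D in Hinv.
  pose proof (coeff_sum_lower_L2 t k HL2 (Rlt_le _ _ Ht) Hk) as Hsum.
  assert (Hk2 : forall j, (j < N)%nat -> Rabs (k j) <= 2)
    by (intros; apply (near_ker_coeff t); auto; lra).
  (* the three other terms of the invariant are bounded *)
  assert (Ht_ln : Rabs (fsum N (fun j => k j * ln (u t j ^ 2))) <= INR N * (2 * Lam)).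
  { apply fsum_abs_le. intros j Hj. rewrite Rabs_mult.
    apply Rmult_le_compat; try apply Rabs_pos; auto. apply ln_sq_u_bound; auto; lra. }
  assert (H0_ln : Rabs (fsum N (fun j => k j * ln (u 0 j ^ 2)))
                  <= fsum N (fun j => 2 * Rabs (ln (u 0 j ^ 2)))).
  { eapply Rle_trans; [apply fsum_abs|]. apply fsum_le. intros j Hj.
    rewrite Rabs_mult. apply Rmult_le_compat_r; auto using Rabs_pos. }
  assert (H0_r : Rabs (fsum N k * (r 0 ^ 2 / D)) <= INR N * 2 * Rabs (r 0 ^ 2 / D)).
  { rewrite Rabs_mult. apply Rmult_le_compat_r; [apply Rabs_pos|].
    now apply fsum_abs_le. }
  assert (Hmain : / 2 * (r t ^ 2 / D) <= Y0 + INR N * (2 * Lam)).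
  { apply Rle_trans with (fsum N k * (r t ^ 2 / D)).
    - apply Rmult_le_compat_r; [|exact Hsum].
      apply Rle_mult_inv_pos; [apply pow2_ge_0|exact HD].
    - pose proof (Rle_abs (fsum N (fun j => k j * ln (u 0 j ^ 2)))).
      pose proof (Rle_abs (fsum N k * (r 0 ^ 2 / D))).
      pose proof (Rle_abs (- fsum N (fun j => k j * ln (u t j ^ 2)))) as Hneg.
      rewrite Rabs_Ropp in Hneg. unfold Y0. lra. }
  assert (r t ^ 2 <= 2 * D * (Y0 + INR N * (2 * Lam))).
  { replace (r t ^ 2) with (2 * D * (/ 2 * (r t ^ 2 / D))) by (field; lra).
    apply Rmult_le_compat_l; lra. }
  nra.
Qed.

Lemma radius_bounded : exists K, forall t, 0 <= t -> r t <= K.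
Proof.
  destruct large_image_or_near_kernel as [K1 HK1].
  assert (HK2 : exists K2, forall t k, 0 < t -> near_ker t k -> r t <= K2)
    by (destruct HL; [apply radius_near_kernel_L1|apply radius_near_kernel_L2]; auto).
  destruct HK2 as [K2 HK2].
  exists (Rmax (Rmax (1 + Rabs K1) K2) (r 0)). intros t [Ht| <-]; [|apply Rmax_r].
  eapply Rle_trans; [|apply Rmax_l].
  destruct (HK1 t (Rlt_le _ _ Ht)) as [Hpow|[k Hk]].
  - eapply Rle_trans; [|apply Rmax_l]. now apply (le_of_pow_le L).
  - eapply Rle_trans; [|apply Rmax_r]. now apply (HK2 t k).
Qed.

End WeightNormalizedFlow.

Theorem mainTheorem14 :
  forall (L M N : nat) (A : nat -> nat -> R) (b : nat -> R) (eta : R)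
    (r : R -> R) (u : R -> nat -> R) (r0 : R) (u0 : nat -> R),
    (L = 1%nat \/ L = 2%nat) ->
    (0 < N)%nat ->
    0 < eta ->
    0 < r0 ->
    (forall j, (j < N)%nat -> 0 < u0 j) ->
    wn_flow L M N A b eta 1 r u r0 u0 ->
    (exists c, 0 < c /\
       forall t j, 0 <= t -> (j < N)%nat -> c <= Rabs (u t j)) ->
    exists C, forall t, 0 <= t -> r t <= C.
Proof.
  intros L M N A b eta r u r0 u0 HL HN Heta _ _ Hflow [c [Hc Hu_away]].
  destruct Hflow as (_ & _ & Hr_cont & Hu_cont & Hflow_r & Hflow_u).
  exact (radius_bounded L M N A b eta c r u HL HN Heta Hr_cont Hu_cont
           Hflow_r Hflow_u Hc Hu_away).
Qed.
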